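(* Let $\mathbf S$ be a specialization semilattice and let $\precsim$ and $\sim$ be the relations on $S\times S^{<\omega}$ defined in the context. Then: (i) $\precsim$ is reflexive and transitive, hence $\sim$ is an equivalence relation. (ii) The map $K[a,\{b_1,\dots,b_h\}]=[a,\{a\vee_S b_1\vee_S\cdots\vee_S b_h\}]$ is well defined on $\sim$-classes, i.e. if $(a,\{b_1,\dots,b_h\})\sim(c,\{d_1,\dots,d_k\})$ then $(a,\{a\vee_S b_1\vee_S\cdots\vee_S b_h\})\sim(c,\{c\vee_S d_1\vee_S\cdots\vee_S d_k\})$. (iii) $\sim$ is a congruence of the product semilattice $(S,\vee_S)\times(S^{<\omega},\cup)$, so the quotient $\widetilde S$ inherits a semilattice operation given by $[a,B]\vee[c,D]=[a\vee_S c,B\cup D]$; moreover, for the induced order $\le$ on $\widetilde S$, $[a,B]\le[c,D]$ holds if and only if $(a,B)\precsim(c,D)$.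
   Context: A specialization semilattice is a triple $\mathbf S=(S,\vee,\sqsubseteq)$ where $(S,\vee)$ is a join-semilattice, with induced order $a\le b$ iff $a\vee b=b$, and $\sqsubseteq$ is a binary relation on $S$ such that for all $a,b,c,a_1\in S$: (S1) $a\le b$ implies $a\sqsubseteq b$; (S2) $a\sqsubseteq b$ and $b\sqsubseteq c$ imply $a\sqsubseteq c$; (S3) $a\sqsubseteq b$ and $a_1\sqsubseteq b$ imply $a\vee a_1\sqsubseteq b$. Write $\vee_S,\le_S,\sqsubseteq_S$ for the operations/relations of $\mathbf S$. Let $S^{<\omega}$ be the set of finite subsets of $S$. On $S\times S^{<\omega}$ define $(a,B)\precsim(c,D)$, where $D=\{d_1,\dots,d_k\}$ ($k\ge 0$), to hold iff (a1) there exist $d_1^*,\dots,d_k^*\in S$ with $d_j^*\sqsubseteq_S d_j$ for each $j\le k$ and $a\le_S c\vee_S d_1^*\vee_S\cdots\vee_S d_k^*$ (when $D=\emptyset$ this means $a\le_S c$); and (a2) for every $b\in B$ there is $d\in D$ with $b\sqsubseteq_S d$. Let $(a,B)\sim(c,D)$ iff $(a,B)\precsim(c,D)$ and $(c,D)\precsim(a,B)$. $\widetilde S$ denotes the set of $\sim$-classes and $[a,B]$ the class of $(a,B)$. *)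

From Stdlib Require Export List Ensembles Finite_sets.

Record SpecSL := {
  car :> Type;
  join : car -> car -> car;
  sq : car -> car -> Prop;
  joinA : forall x y z, join x (join y z) = join (join x y) z;
  joinC : forall x y, join x y = join y x;
  joinI : forall x, join x x = x;
  spec_S1 : forall a b, join a b = b -> sq a b;
  spec_S2 : forall a b c, sq a b -> sq b c -> sq a c;
  spec_S3 : forall a a1 b, sq a b -> sq a1 b -> sq (join a a1) b
}.

Arguments join {s} _ _.
Arguments sq {s} _ _.

Definition le {S : SpecSL} (a b : S) : Prop := join a b = b.

(* A finite subset D of S is represented as a (finite) predicate; a list
   [d_1;...;d_k] enumerates D if it lists its elements without repetition. *)
Definition enumerates {S : SpecSL} (D : Ensemble S) (l : list S) : Prop :=
  NoDup l /\ forall x, List.In x l <-> D x.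

Definition precsim {S : SpecSL} (a : S) (B : Ensemble S) (c : S) (D : Ensemble S) : Prop :=
  (exists (ld lstar : list S),
      enumerates D ld /\
      Forall2 (fun x d => sq x d) lstar ld /\
      le a (fold_right join c lstar)) /\
  (forall b, B b -> exists d, D d /\ sq b d).

Definition sim {S : SpecSL} (a : S) (B : Ensemble S) (c : S) (D : Ensemble S) : Prop :=
  precsim a B c D /\ precsim c D a B.

(* The witnesses [d_j^*] in (a1) can be merged: any finite family of elements, each
   specializing to some element of [D], is dominated by a single family [d_j^* ⊑ d_j]
   indexed by an enumeration of [D], obtained by joining each element into the slot of
   an element of [D] it specializes to (S3).  So (a1) just says that [a] lies below [c]
   joined with finitely many specializations of elements of [D].  In this form [≾] is
   visibly a preorder in which [(a \/ c, B ∪ D)] is the least upper bound of [(a, B)]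
   and [(c, D)], which gives (i) and (iii); (ii) follows from the observation that
   (a1) forces [a ⊑ c \/ d_1 \/ ... \/ d_k]. *)
From Stdlib Require Import Finite_sets_facts.

Section SpecializationPreorder.

Variable S : SpecSL.
Implicit Types (a b c d e x y : S) (B D E : Ensemble S) (l lb ld lstar : list S).

Notation joins c l := (fold_right join c l).

Lemma le_refl x : le x x.
Proof. apply joinI. Qed.

Lemma le_trans a b c : le a b -> le b c -> le a c.
Proof. unfold le; intros Hab Hbc. rewrite <- Hbc, joinA, Hab. reflexivity. Qed.

Lemma le_join_l a b : le a (join a b).
Proof. unfold le. rewrite joinA, joinI. reflexivity. Qed.

Lemma le_join_r a b : le b (join a b).
Proof. unfold le. rewrite (joinC _ a b), joinA, joinI. reflexivity. Qed.

Lemma join_lub a b c : le a c -> le b c -> le (join a b) c.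
Proof. unfold le; intros Hac Hbc. rewrite <- joinA, Hbc, Hac. reflexivity. Qed.

Lemma sq_refl x : sq x x.
Proof. apply spec_S1, joinI. Qed.

Lemma le_joins_base c l : le c (joins c l).
Proof.
  induction l as [|x l IH]; simpl; [apply le_refl|].
  apply le_trans with (1 := IH), le_join_r.
Qed.

Lemma le_joins_in c e l : List.In e l -> le e (joins c l).
Proof.
  induction l as [|x l IH]; simpl; [tauto|].
  intros [<- | Hin]; [apply le_join_l|].
  apply le_trans with (1 := IH Hin), le_join_r.
Qed.

Lemma joins_lub c y l :
  le c y -> (forall e, List.In e l -> le e y) -> le (joins c l) y.
Proof.
  induction l as [|x l IH]; simpl; intros Hc Hl; [exact Hc|].
  apply join_lub; auto.
Qed.

Lemma joins_mono c c' l l' : le c c' -> incl l l' -> le (joins c l) (joins c' l').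
Proof.
  intros Hc Hl. apply joins_lub.
  - apply le_trans with (1 := Hc), le_joins_base.
  - intros e He. apply le_joins_in, Hl, He.
Qed.

Lemma sq_joins c y l :
  sq c y -> (forall e, List.In e l -> sq e y) -> sq (joins c l) y.
Proof.
  induction l as [|x l IH]; simpl; intros Hc Hl; [exact Hc|].
  apply spec_S3; auto.
Qed.

Definition sq_into D x : Prop := exists d, D d /\ sq x d.

Definition covered a c D : Prop :=
  exists l, Forall (sq_into D) l /\ le a (joins c l).

Definition enumerable D : Prop := exists l, enumerates D l.

Lemma sq_into_trans D E x :
  sq_into D x -> (forall d, D d -> sq_into E d) -> sq_into E x.
Proof.
  intros [d [Hd Hxd]] HDE. destruct (HDE d Hd) as [f [Hf Hdf]].
  exists f. split; [exact Hf | exact (spec_S2 _ _ _ _ Hxd Hdf)].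
Qed.

Lemma sq_into_joins D c ld x : enumerates D ld -> sq_into D x -> sq x (joins c ld).
Proof.
  intros [_ Hen] [d [Hd Hxd]].
  apply spec_S2 with (1 := Hxd), spec_S1, le_joins_in, Hen, Hd.
Qed.

Lemma covered_sq_joins a c D ld : enumerates D ld -> covered a c D -> sq a (joins c ld).
Proof.
  intros Hen [l [Hl Hle]]. apply spec_S2 with (1 := spec_S1 _ _ _ Hle).
  apply sq_joins; [apply spec_S1, le_joins_base|].
  intros e He. rewrite Forall_forall in Hl.
  apply (sq_into_joins D c ld e Hen), Hl, He.
Qed.

Lemma Forall2_sq_refl l : Forall2 sq l l.
Proof. induction l; constructor; [apply sq_refl | assumption]. Qed.

Lemma Forall2_sq_absorb c e d lstar ld :
  Forall2 sq lstar ld -> List.In d ld -> sq e d ->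
  exists lstar', Forall2 sq lstar' ld /\ joins c lstar' = join e (joins c lstar).
Proof.
  intros H. induction H as [|x d0 lstar ld Hx Hsq IH]; simpl; [tauto|].
  intros [<- | Hin] Hed.
  - exists (join e x :: lstar). split; [constructor; [apply spec_S3; assumption | assumption]|].
    simpl. rewrite joinA. reflexivity.
  - destruct (IH Hin Hed) as [lstar' [Hsq' Hjoin]].
    exists (x :: lstar'). split; [constructor; assumption|].
    simpl. rewrite Hjoin, !joinA, (joinC _ x e). reflexivity.
Qed.

Lemma specializations_merge D ld c l :
  enumerates D ld -> Forall (sq_into D) l ->
  exists lstar, Forall2 sq lstar ld /\ le (joins c l) (joins c lstar).
Proof.
  intros [_ Hen] Hl. induction Hl as [|e l [d [Hd Hed]] _ IH].
  - exists ld. split; [apply Forall2_sq_refl | apply le_joins_base].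
  - destruct IH as [lstar [Hsq Hle]].
    destruct (Forall2_sq_absorb c e d lstar ld Hsq (proj2 (Hen d) Hd) Hed)
      as [lstar' [Hsq' Hjoin]].
    exists lstar'. split; [exact Hsq'|]. simpl. rewrite Hjoin.
    apply join_lub; [apply le_join_l | apply le_trans with (1 := Hle), le_join_r].
Qed.

Lemma Forall2_sq_into D ld lstar :
  (forall d, List.In d ld -> D d) -> Forall2 sq lstar ld -> Forall (sq_into D) lstar.
Proof.
  intros Hen Hsq. induction Hsq as [|x d lstar ld Hxd _ IH]; constructor.
  - exists d. split; [apply Hen; left; reflexivity | exact Hxd].
  - apply IH. intros d' Hd'. apply Hen. right. exact Hd'.
Qed.

Lemma precsim_iff a B c D :
  precsim a B c D <->
  enumerable D /\ covered a c D /\ (forall b, B b -> sq_into D b).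
Proof.
  split.
  - intros [[ld [lstar [Hen [Hsq Hle]]]] HB].
    split; [exists ld; exact Hen|]. split; [|exact HB].
    exists lstar. split; [|exact Hle].
    apply (Forall2_sq_into D ld); [apply Hen | exact Hsq].
  - intros [[ld Hen] [[l [Hl Hle]] HB]]. split; [|exact HB].
    destruct (specializations_merge D ld c l Hen Hl) as [lstar [Hsq Hle']].
    exists ld, lstar. split; [exact Hen|]. split; [exact Hsq|].
    apply le_trans with (1 := Hle), Hle'.
Qed.

Lemma finite_enumerable D : Finite S D -> enumerable D.
Proof.
  induction 1 as [|D _ [l [Hnd Hen]] x Hx].
  - exists nil. split; [constructor|]. intros x. split; [intros []| intros H; destruct H].
  - exists (x :: l). split.
    + constructor; [rewrite Hen; exact Hx | exact Hnd].
    + intros y. simpl. rewrite Hen. split.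
      * intros [<- | Hy]; [right; constructor | left; exact Hy].
      * intros [z Hz | z Hz]; [right; exact Hz | destruct Hz; left; reflexivity].
Qed.

Lemma precsim_mono a a' B B' :
  le a a' -> Included S B B' -> enumerable B' -> precsim a B a' B'.
Proof.
  intros Ha HB Hen. apply precsim_iff. repeat split; [exact Hen| |].
  - exists nil. split; [constructor | exact Ha].
  - intros b Hb. exists b. split; [apply HB, Hb | apply sq_refl].
Qed.

Lemma precsim_refl a B : enumerable B -> precsim a B a B.
Proof. intros Hen. apply precsim_mono; [apply le_refl | intros x Hx; exact Hx | exact Hen]. Qed.

Lemma precsim_join_l a c B D : enumerable (Union S B D) -> precsim a B (join a c) (Union S B D).
Proof. apply precsim_mono; [apply le_join_l | intros x; apply Union_introl]. Qed.

Lemma precsim_join_r a c B D : enumerable (Union S B D) -> precsim c D (join a c) (Union S B D).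
Proof. apply precsim_mono; [apply le_join_r | intros x; apply Union_intror]. Qed.

Lemma precsim_trans a c e B D E : precsim a B c D -> precsim c D e E -> precsim a B e E.
Proof.
  rewrite !precsim_iff.
  intros [_ [[l1 [Hl1 Hle1]] HBD]] [HE [[l2 [Hl2 Hle2]] HDE]].
  repeat split; [exact HE | |].
  - exists (l1 ++ l2). split.
    + apply Forall_app. split; [|exact Hl2].
      apply Forall_impl with (2 := Hl1). intros x Hx. apply (sq_into_trans D); auto.
    + apply le_trans with (1 := Hle1). rewrite fold_right_app.
      apply joins_mono; [exact Hle2 | apply incl_refl].
  - intros b Hb. apply (sq_into_trans D); auto.
Qed.

Lemma precsim_join_lub a c e B D E :
  precsim a B e E -> precsim c D e E -> precsim (join a c) (Union S B D) e E.
Proof.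
  rewrite !precsim_iff.
  intros [HE [[l1 [Hl1 Hle1]] HB]] [_ [[l2 [Hl2 Hle2]] HD]].
  repeat split; [exact HE | |].
  - exists (l1 ++ l2). split; [apply Forall_app; split; assumption|].
    apply join_lub.
    + apply le_trans with (1 := Hle1), joins_mono; [apply le_refl | apply incl_appl, incl_refl].
    + apply le_trans with (1 := Hle2), joins_mono; [apply le_refl | apply incl_appr, incl_refl].
  - intros b [b' Hb | b' Hb]; auto.
Qed.

Lemma precsim_join a a' c c' B B' D D' :
  enumerable (Union S B' D') -> precsim a B a' B' -> precsim c D c' D' ->
  precsim (join a c) (Union S B D) (join a' c') (Union S B' D').
Proof.
  intros Hen Ha Hc. apply precsim_join_lub.
  - apply precsim_trans with (1 := Ha), precsim_join_l, Hen.
  - apply precsim_trans with (1 := Hc), precsim_join_r, Hen.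
Qed.

Lemma enumerates_Singleton x : enumerates (Singleton S x) (x :: nil).
Proof.
  split; [constructor; [intros [] | constructor]|].
  intros y. simpl. split; [intros [<- | []]; constructor | intros H; destruct H; left; reflexivity].
Qed.

Lemma precsim_K a c B D lb ld :
  enumerates B lb -> enumerates D ld -> precsim a B c D ->
  precsim a (Singleton S (joins a lb)) c (Singleton S (joins c ld)).
Proof.
  intros HB HD H. apply precsim_iff in H. destruct H as [_ [Hcov HBD]].
  assert (Ha : sq a (joins c ld)) by exact (covered_sq_joins a c D ld HD Hcov).
  apply precsim_iff. repeat split.
  - exists (joins c ld :: nil). apply enumerates_Singleton.
  - exists (a :: nil). split; [|apply le_join_l].
    constructor; [|constructor]. exists (joins c ld). split; [constructor | exact Ha].
  - intros b Hb. destruct Hb. exists (joins c ld). split; [constructor|].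
    apply sq_joins; [exact Ha|]. intros e He.
    apply (sq_into_joins D c ld e HD), HBD, HB, He.
Qed.

End SpecializationPreorder.

Theorem lemma3p6 (S : SpecSL) :
  (* (i) ≾ reflexive and transitive on S × S^{<ω}; hence ~ is an equivalence *)
  ((forall (a : S) (B : Ensemble S), Finite S B -> precsim a B a B) /\
   (forall (a c e : S) (B D E : Ensemble S),
      Finite S B -> Finite S D -> Finite S E ->
      precsim a B c D -> precsim c D e E -> precsim a B e E) /\
   (forall (a : S) (B : Ensemble S), Finite S B -> sim a B a B) /\
   (forall (a c : S) (B D : Ensemble S),
      Finite S B -> Finite S D -> sim a B c D -> sim c D a B) /\
   (forall (a c e : S) (B D E : Ensemble S),
      Finite S B -> Finite S D -> Finite S E ->
      sim a B c D -> sim c D e E -> sim a B e E)) /\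
  (* (ii) K[a,{b_1..b_h}] = [a,{a \/ b_1 \/ ... \/ b_h}] is well defined *)
  (forall (a c : S) (B D : Ensemble S) (lb ld : list S),
      enumerates B lb -> enumerates D ld ->
      sim a B c D ->
      sim a (Singleton S (fold_right join a lb))
          c (Singleton S (fold_right join c ld))) /\
  (* (iii) ~ is a congruence of (S, \/) × (S^{<ω}, ∪) *)
  (forall (a a' c c' : S) (B B' D D' : Ensemble S),
      Finite S B -> Finite S B' -> Finite S D -> Finite S D' ->
      sim a B a' B' -> sim c D c' D' ->
      sim (join a c) (Union S B D) (join a' c') (Union S B' D')) /\
  (* and for the induced order on the quotient:
     [a,B] <= [c,D]  (i.e. [a \/ c, B ∪ D] = [c,D])  iff  (a,B) ≾ (c,D) *)
  (forall (a c : S) (B D : Ensemble S),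
      Finite S B -> Finite S D ->
      (sim (join a c) (Union S B D) c D <-> precsim a B c D)).
Proof.
  assert (Hrefl : forall (a : S) B, Finite S B -> precsim a B a B)
    by (intros; apply precsim_refl, finite_enumerable; assumption).
  assert (HU : forall B D, Finite S B -> Finite S D -> enumerable S (Union S B D))
    by (intros; apply finite_enumerable, Union_preserves_Finite; assumption).
  split; [split; [|split; [|split; [|split]]] | split; [|split]].
  - exact Hrefl.
  - intros; apply precsim_trans with c D; assumption.
  - intros a B HB. split; apply Hrefl; exact HB.
  - intros a c B D _ _ [Hac Hca]. split; assumption.
  - intros a c e B D E _ _ _ [Hac Hca] [Hce Hec].
    split; [apply precsim_trans with c D | apply precsim_trans with c D]; assumption.
  - intros a c B D lb ld HB HD [Hac Hca]. split; [apply (precsim_K S a c B D) | apply (precsim_K S c a D B)]; assumption.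
  - intros a a' c c' B B' D D' FB FB' FD FD' [Ha Ha'] [Hc Hc'].
    split; apply precsim_join; auto.
  - intros a c B D FB FD. split.
    + intros [H _]. apply precsim_trans with (join a c) (Union S B D); [|exact H].
      apply precsim_join_l, HU; assumption.
    + intros H. split.
      * apply precsim_join_lub; [exact H | apply Hrefl, FD].
      * apply precsim_join_r, HU; assumption.
Qed.
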